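(* Let $G$ be a group with a finite symmetric subset $S$ such that $\overline S$ generates $G$, and let $\|\cdot\|$ be the word norm associated with $\overline S$. Then $(G,\|\cdot\|)$ is metrically fully residually $\mathcal C$, where $\mathcal C$ is the class of finite groups with invariant integer-valued norms, if and only if for every $m\in\mathbb N$ the ball $B_m(1)=\{g\in G:\|g\|\le m\}$ is closed in the profinite topology of $G$.
   Context: $\Lambda=[0,\infty)$. A pseudo-norm on $G$ is $\ell:G\to\Lambda$ with $\ell(1)=0$, $\ell(g)=\ell(g^{-1})$, $\ell(gh)\le\ell(g)+\ell(h)$; a norm if $\ell(g)=0\Rightarrow g=1$; invariant if $\ell(h^{-1}gh)=\ell(g)$. $\overline S$ is the smallest conjugation-invariant subset of $G$ containing $S$; $\|g\|=\min\{k:g=s_1\cdots s_k,s_i\in\overline S\}$. For pseudo-normed $(G_1,\ell_1),(G_2,\ell_2)$, finite $D\subseteq G_1$ and finite $Q\subseteq\Lambda\cap\mathbb Q$ with $0\in Q$, $\varphi:G_1\to G_2$ is a $D$-$Q$-almost-homomorphism if injective on $D$, $\varphi(hg)=\varphi(h)\varphi(g)$ whenever $h,g,hg\in D$, and $\ell_1(g)\,\square\,q\iff\ell_2(\varphi(g))\,\square\,q$ for all $g\in D,q\in Q,\square\in\{<,>,=\}$. $(G,\ell)$ is metrically fully residually $\mathcal C$ if for all such $D,Q$ there are $(C,\ell_C)\in\mathcal C$ and a group homomorphism $\varphi:G\to C$ with $\ell_C(\varphi(g))\le\ell(g)$ for all $g$, which is a $D$-$Q$-almost-homomorphism. *)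

From mathcomp Require Import all_boot all_order all_algebra all_fingroup.
From Stdlib Require Import ClassicalEpsilon.
From Stdlib Require List.
Import List.ListNotations.
Set Implicit Arguments. Unset Strict Implicit. Unset Printing Implicit Defensive.
Import Order.TTheory GRing.Theory Num.Theory.

Record Grp := {
  gcar :> Type;
  gmul : gcar -> gcar -> gcar;
  ginv : gcar -> gcar;
  gone : gcar;
  gmulA : forall x y z, gmul x (gmul y z) = gmul (gmul x y) z;
  gmul1 : forall x, gmul gone x = x;
  gmulV : forall x, gmul (ginv x) x = gone }.

Arguments gmul {g}. Arguments ginv {g}. Arguments gone {g}.

Section Defs.
Variable G : Grp.

Definition gprod (l : list G) : G := List.fold_right gmul gone l.

Definition gconj (x h : G) : G := gmul (ginv h) (gmul x h).

(* \overline S : smallest conjugation-invariant subset containing S,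
   i.e. the set of all conjugates of elements of S. *)
Definition Sbar (S : list G) (x : G) : Prop := exists s h, List.In s S /\ x = gconj s h.

Definition generates (T : G -> Prop) : Prop :=
  forall g : G, exists l : list G,
    List.Forall (fun x => T x \/ T (ginv x)) l /\ gprod l = g.

Definition word_len (S : list G) (g : G) (k : nat) : Prop :=
  exists l : list G, List.length l = k /\ List.Forall (Sbar S) l /\ gprod l = g.

Definition wnorm (S : list G) (g : G) : nat :=
  epsilon (inhabits 0%N)
    (fun n => word_len S g n /\ forall k, word_len S g k -> (n <= k)%N).

Definition subgroup (N : G -> Prop) : Prop :=
  N gone /\ (forall x y, N x -> N y -> N (gmul x y)) /\ (forall x, N x -> N (ginv x)).
Definition normal (N : G -> Prop) : Prop := forall x h, N x -> N (gconj x h).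
Definition finite_index (N : G -> Prop) : Prop :=
  exists reps : list G, forall x, exists r, List.In r reps /\ N (gmul (ginv r) x).
Definition profinite_open (U : G -> Prop) : Prop :=
  forall x, U x -> exists N : G -> Prop,
    subgroup N /\ normal N /\ finite_index N /\ forall n, N n -> U (gmul x n).
Definition profinite_closed (X : G -> Prop) : Prop :=
  profinite_open (fun x => ~ X x).

Definition inv_int_norm (gT : finGroupType) (lC : gT -> nat) : Prop :=
  lC 1%g = 0%N /\ (forall x, lC (x^-1)%g = lC x) /\
  (forall x y, (lC (x * y)%g <= lC x + lC y)%N) /\ (forall x, lC x = 0%N -> x = 1%g) /\
  (forall x y, lC (x ^ y)%g = lC x).

Definition is_hom (gT : finGroupType) (phi : G -> gT) : Prop :=
  forall x y, phi (gmul x y) = (phi x * phi y)%g.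

Definition almost_hom (gT : finGroupType) (l1 : G -> nat) (l2 : gT -> nat)
    (D : list G) (Q : seq rat) (phi : G -> gT) : Prop :=
  (forall x y, List.In x D -> List.In y D -> phi x = phi y -> x = y) /\
  (forall h g, List.In h D -> List.In g D -> List.In (gmul h g) D -> phi (gmul h g) = (phi h * phi g)%g) /\
  (forall g q, List.In g D -> q \in Q ->
     ((((l1 g)%:R : rat) < q)%R <-> (((l2 (phi g))%:R : rat) < q)%R) /\
     ((((l1 g)%:R : rat) > q)%R <-> (((l2 (phi g))%:R : rat) > q)%R) /\
     ((((l1 g)%:R : rat) = q)%R <-> (((l2 (phi g))%:R : rat) = q)%R)).

Definition mfr_finite_inv (l : G -> nat) : Prop :=
  forall (D : list G) (Q : seq rat),
    all (fun q : rat => (0 <= q)%R) Q -> (0%R \in Q) ->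
    exists (gT : finGroupType) (lC : gT -> nat) (phi : G -> gT),
      inv_int_norm lC /\ is_hom phi /\ (forall g, (lC (phi g) <= l g)%N) /\
      almost_hom l lC D Q phi.
End Defs.

(** The quotient of [G] by a finite-index normal subgroup [N] carries the
    quotient norm [u |-> min { ||g|| : g maps to u }], an invariant integer norm
    bounded by the word norm.  It agrees with [||.||] at [g] as soon as
    [||g|| <= ||g n||] for all [n] in [N], and by closedness of the ball of radius
    [||g|| - 1] such an [N] exists for each [g].  Intersecting finitely many of
    them makes the quotient map isometric on a finite set [D] and on the
    quotients [d'^-1 d] of its elements, hence injective on [D].  Conversely,
    if [||x|| > m], a map to a finite normed group keeping [||x||] above [m]
    has a kernel [K] with [x K] disjoint from the ball of radius [m]. *)
From Pilot Require Import Defs.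
From HB Require Import structures.
From mathcomp Require Import all_boot all_order all_algebra all_fingroup.
From mathcomp Require Import zify.
From Stdlib Require List.
From Stdlib Require Import ClassicalEpsilon.
Set Implicit Arguments. Unset Strict Implicit. Unset Printing Implicit Defensive.
Import GRing.Theory Num.Theory.

Local Infix "⊗" := gmul (at level 40, left associativity).

Section GroupLaws.
Variable G : Grp.
Implicit Types x y a b : G.

Lemma gmulxV x : x ⊗ ginv x = gone.
Proof.
rewrite -[x ⊗ _]gmul1 -{1}(gmulV (ginv x)) -gmulA (gmulA (ginv x)) gmulV gmul1.
by rewrite gmulV.
Qed.

Lemma gmulx1 x : x ⊗ gone = x.
Proof. by rewrite -(gmulV x) gmulA gmulxV gmul1. Qed.

Lemma gmulK x y : ginv x ⊗ (x ⊗ y) = y.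
Proof. by rewrite gmulA gmulV gmul1. Qed.

Lemma gmulKV x y : x ⊗ (ginv x ⊗ y) = y.
Proof. by rewrite gmulA gmulxV gmul1. Qed.

Lemma ginv_uniq a b : a ⊗ b = gone -> ginv a = b.
Proof. by move=> ab1; rewrite -(gmulx1 (ginv a)) -ab1 gmulK. Qed.

Lemma ginvK x : ginv (ginv x) = x.
Proof. by apply: ginv_uniq; rewrite gmulV. Qed.

Lemma ginv1 : ginv (@gone G) = gone.
Proof. by apply: ginv_uniq; rewrite gmul1. Qed.

Lemma ginvM x y : ginv (x ⊗ y) = ginv y ⊗ ginv x.
Proof. by apply: ginv_uniq; rewrite -gmulA gmulKV gmulxV. Qed.

End GroupLaws.

Ltac gsimpl := repeat progress rewrite ?ginvM ?ginvK ?ginv1 -?gmulA ?gmul1 ?gmulx1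
   ?gmulK ?gmulKV ?gmulV ?gmulxV /=.

Definition holds (P : Prop) : bool :=
  if excluded_middle_informative P then true else false.

Lemma holdsP (P : Prop) : reflect P (holds P).
Proof. by rewrite /holds; case: excluded_middle_informative => p; constructor. Qed.

Definition nat_min (P : nat -> Prop) : nat :=
  epsilon (inhabits 0%N) (fun n => P n /\ forall k, P k -> (n <= k)%N).

Lemma nat_minP (P : nat -> Prop) :
  (exists n, P n) -> P (nat_min P) /\ forall k, P k -> (nat_min P <= k)%N.
Proof.
move=> [n Pn]; apply: (epsilon_spec _ (fun n => P n /\ forall k, P k -> (n <= k)%N)).
have [m /holdsP Pm min_m] :=
  ex_minnP (ex_intro (fun k => holds (P k)) n (introT (holdsP _) Pn)).
by exists m; split=> // k /holdsP; apply: min_m.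
Qed.

Lemma mem_In (T : eqType) (s : seq T) x : x \in s -> List.In x s.
Proof. by elim: s => //= a s IHs; rewrite inE => /orP[/eqP->|/IHs]; [left|right]. Qed.

Lemma In_has (T : Type) (p : pred T) (s : seq T) x : List.In x s -> p x -> has p s.
Proof. by elim: s => //= a s IHs [-> -> // | /IHs s_p /s_p ->]; rewrite orbT. Qed.

Record inv_norm (G : Grp) (l : G -> nat) : Prop := InvNorm {
  norm1 : l gone = 0%N;
  normV : forall x, l (ginv x) = l x;
  normM : forall x y, (l (x ⊗ y) <= l x + l y)%N;
  norm_eq0 : forall x, l x = 0%N -> x = gone;
  normJ : forall x h, l (gconj x h) = l x }.

Section WordNorm.
Variables (G : Grp) (S : list G).
Hypothesis S_sym : forall s, List.In s S -> List.In (ginv s) S.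
Hypothesis S_gen : generates (Sbar S).

Lemma gprod_cat (l1 l2 : list G) : gprod (List.app l1 l2) = gprod l1 ⊗ gprod l2.
Proof. by elim: l1 => [|a l IHl] /=; [rewrite gmul1 | rewrite IHl gmulA]. Qed.

Lemma gprod_rev_inv (l : list G) : gprod (List.rev (List.map ginv l)) = ginv (gprod l).
Proof.
elim: l => [|a l IHl] /=; first by rewrite ginv1.
by rewrite gprod_cat IHl /= gmulx1 ginvM.
Qed.

Lemma gprod_conj (l : list G) h :
  gprod (List.map (fun x => gconj x h) l) = gconj (gprod l) h.
Proof. by elim: l => [|a l IHl] /=; rewrite ?IHl /gconj; gsimpl. Qed.

Lemma Sbar_inv x : Sbar S x -> Sbar S (ginv x).
Proof.
by case=> s [h [Ss ->]]; exists (ginv s), h; split; [apply: S_sym | rewrite /gconj; gsimpl].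
Qed.

Lemma Sbar_conj x k : Sbar S x -> Sbar S (gconj x k).
Proof. by case=> s [h [Ss ->]]; exists s, (h ⊗ k); split; rewrite // /gconj; gsimpl. Qed.

Lemma wnormP g : word_len S g (wnorm S g) /\ forall k, word_len S g k -> (wnorm S g <= k)%N.
Proof.
have [l [Sl <-]] := S_gen g.
suff /nat_minP : exists n, word_len S (gprod l) n by [].
exists (List.length l), l; split=> //; split=> //.
by apply: List.Forall_impl Sl => x [//|/Sbar_inv]; rewrite ginvK.
Qed.

Lemma wnorm_le g k : word_len S g k -> (wnorm S g <= k)%N.
Proof. exact: (proj2 (wnormP g)). Qed.

Lemma wnormM g h : (wnorm S (g ⊗ h) <= wnorm S g + wnorm S h)%N.
Proof.
have [[l1 [<- [S1 <-]]] _] := wnormP g; have [[l2 [<- [S2 <-]]] _] := wnormP h.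
apply: wnorm_le; exists (List.app l1 l2).
rewrite List.length_app gprod_cat; split=> //; split=> //.
exact/List.Forall_app.
Qed.

Lemma wnormV_le g : (wnorm S (ginv g) <= wnorm S g)%N.
Proof.
have [[l [<- [Sl <-]]] _] := wnormP g.
apply: wnorm_le; exists (List.rev (List.map ginv l)).
rewrite List.length_rev List.length_map gprod_rev_inv; split=> //; split=> //.
by apply/List.Forall_rev/List.Forall_map; apply: List.Forall_impl Sl; apply: Sbar_inv.
Qed.

Lemma wnormJ_le g h : (wnorm S (gconj g h) <= wnorm S g)%N.
Proof.
have [[l [<- [Sl <-]]] _] := wnormP g.
apply: wnorm_le; exists (List.map (fun x => gconj x h) l).
rewrite List.length_map gprod_conj; split=> //; split=> //.
by apply/List.Forall_map; apply: List.Forall_impl Sl => x; apply: Sbar_conj.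
Qed.

Lemma wnorm_inv_norm : inv_norm (wnorm S).
Proof.
split.
- by apply/eqP; rewrite -leqn0; apply: wnorm_le; exists nil.
- move=> x; apply/eqP; rewrite eqn_leq wnormV_le /=.
  by have := wnormV_le (ginv x); rewrite ginvK.
- exact: wnormM.
- move=> x x0; have [[l [lx [_ <-]]] _] := wnormP x.
  by move: lx; rewrite x0; case: l.
- move=> x h; apply/eqP; rewrite eqn_leq wnormJ_le /=.
  have := wnormJ_le (gconj x h) (ginv h).
  by rewrite (_ : gconj (gconj x h) (ginv h) = x) // /gconj; gsimpl.
Qed.

End WordNorm.

Definition fi_normal (G : Grp) (N : G -> Prop) : Prop :=
  subgroup N /\ Defs.normal N /\ finite_index N.

Section FiniteIndexNormal.
Variable G : Grp.
Implicit Types N : G -> Prop.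

Lemma fi_normalT : fi_normal (fun _ : G => True).
Proof. by do 2!split=> //; exists [:: gone] => x; exists gone; split=> //; left. Qed.

Lemma finite_indexI N1 N2 : subgroup N1 -> subgroup N2 ->
  finite_index N1 -> finite_index N2 -> finite_index (fun x => N1 x /\ N2 x).
Proof.
move=> [_ [N1M N1V]] [_ [N2M N2V]] [reps1 cover1] [reps2 cover2].
pose meet (p : G * G) :=
  epsilon (inhabits gone) (fun x => N1 (ginv p.1 ⊗ x) /\ N2 (ginv p.2 ⊗ x)).
exists (List.map meet (List.list_prod reps1 reps2)) => x.
have [r1 [R1 x1]] := cover1 x; have [r2 [R2 x2]] := cover2 x.
have [m1 m2] : N1 (ginv r1 ⊗ meet (r1, r2)) /\ N2 (ginv r2 ⊗ meet (r1, r2)).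
  by apply: (epsilon_spec _ (fun x => N1 (ginv r1 ⊗ x) /\ N2 (ginv r2 ⊗ x))); exists x.
exists (meet (r1, r2)); split; first by apply/List.in_map/List.in_prod.
have through r : ginv (meet (r1, r2)) ⊗ x = ginv (ginv r ⊗ meet (r1, r2)) ⊗ (ginv r ⊗ x).
  by gsimpl.
by split; [rewrite (through r1); auto | rewrite (through r2); auto].
Qed.

Lemma fi_normalI N1 N2 :
  fi_normal N1 -> fi_normal N2 -> fi_normal (fun x => N1 x /\ N2 x).
Proof.
move=> [sN1 [nN1 fN1]] [sN2 [nN2 fN2]]; split; last split.
- case: sN1 sN2 => [N11 [N1M N1V]] [N21 [N2M N2V]].
  by split; [|split] => [|x y [? ?] [? ?]|x [? ?]]; split; auto.
- by move=> x h [? ?]; split; auto.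
- exact: finite_indexI.
Qed.

Lemma fi_normal_common (T : Type) (P : T -> G -> Prop) (A : list T) :
  (forall a, List.In a A -> exists N, fi_normal N /\ forall n, N n -> P a n) ->
  exists N, fi_normal N /\ forall a, List.In a A -> forall n, N n -> P a n.
Proof.
elim: A => [|a A IHA] ex_N.
  by exists (fun _ => True); split=> //; apply: fi_normalT.
have [|N0 [fN0 P0]] := IHA; first by move=> b Ab; apply: ex_N; right.
have [|Na [fNa Pa]] := ex_N a; first by left.
exists (fun x => N0 x /\ Na x); split; first exact: fi_normalI.
by move=> b [<- | Ab] n [N0n Nan]; [apply: Pa | apply: P0].
Qed.

End FiniteIndexNormal.

Section Homomorphism.
Variables (G : Grp) (gT : finGroupType) (phi : G -> gT).
Hypothesis phiM : is_hom phi.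

Lemma hom1 : phi gone = 1%g.
Proof.
have := phiM gone gone; rewrite gmul1 => phi11.
by rewrite -[phi gone](mulKg (phi gone)) -phi11 mulVg.
Qed.

Lemma homV x : phi (ginv x) = ((phi x)^-1)%g.
Proof. by rewrite -[phi (ginv x)](mulgK (phi x)) -phiM gmulV hom1 mul1g. Qed.

Lemma homJ x h : phi (gconj x h) = (phi x ^ phi h)%g.
Proof. by rewrite /gconj !phiM homV conjgE. Qed.

Lemma kernel_fi_normal : fi_normal (fun n => phi n = 1%g).
Proof.
split; last split.
- split; first exact: hom1.
  by split=> [x y phix phiy | x phix]; rewrite ?phiM ?homV ?phix ?phiy ?mulg1 ?invg1.
- by move=> x h phix; rewrite homJ phix conj1g.
pose pre u := epsilon (inhabits gone) (fun g => phi g = u).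
have phi_pre g : phi (pre (phi g)) = phi g.
  by apply: (epsilon_spec _ (fun g' => phi g' = phi g)); exists g.
exists (List.map pre (enum gT)) => x; exists (pre (phi x)); split.
  by apply/List.in_map/mem_In; rewrite mem_enum.
by rewrite phiM homV phi_pre mulVg.
Qed.

End Homomorphism.

Section FiniteQuotient.
Variables (G : Grp) (N : G -> Prop).
Hypotheses (N_sub : subgroup N) (N_normal : Defs.normal N).
Variable reps : list G.
Hypothesis reps_cover : forall x, exists r, List.In r reps /\ N (ginv r ⊗ x).

Definition congN x y := N (ginv x ⊗ y).

Lemma congN_sym x y : congN x y -> congN y x.
Proof. by case: N_sub => _ [_ NV] /NV; rewrite /congN; gsimpl. Qed.

Lemma congN_trans x y z : congN x y -> congN y z -> congN x z.
Proof. by case: N_sub => _ [NM _] xy /(NM _ _ xy); rewrite /congN; gsimpl. Qed.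

Lemma congNM x x' y y' : congN x x' -> congN y y' -> congN (x ⊗ y) (x' ⊗ y').
Proof.
case: N_sub => _ [NM _] /(N_normal y) xx' /(NM _ _ xx').
by rewrite /congN /gconj; gsimpl.
Qed.

Lemma congNV x x' : congN x x' -> congN (ginv x) (ginv x').
Proof. by move/congN_sym/(N_normal (ginv x')); rewrite /congN /gconj; gsimpl. Qed.

(* A coset is encoded by the index of the first representative lying in it. *)
Definition coset_idx x : nat := find (fun r => holds (congN r x)) reps.
Definition coset_rep (i : nat) : G := nth gone reps i.

Lemma has_coset_rep x : has (fun r => holds (congN r x)) reps.
Proof.
by have [r [reps_r Nr]] := reps_cover x; apply: (In_has reps_r); apply/holdsP.
Qed.

Lemma coset_idx_lt x : (coset_idx x < size reps)%N.
Proof. by rewrite -has_find has_coset_rep. Qed.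

Lemma congN_coset_rep x : congN (coset_rep (coset_idx x)) x.
Proof. exact/holdsP/(nth_find gone (has_coset_rep x)). Qed.

Lemma coset_idxP x y : coset_idx x = coset_idx y <-> congN x y.
Proof.
split=> [idx_xy | xy].
  apply: congN_trans (congN_sym (congN_coset_rep x)) _.
  by rewrite idx_xy; apply: congN_coset_rep.
apply: eq_find => r; apply/idP/idP => /holdsP rx; apply/holdsP.
  exact: congN_trans rx xy.
exact: congN_trans rx (congN_sym xy).
Qed.

Definition quot := {i : 'I_(size reps) | coset_idx (coset_rep i) == i}.
HB.instance Definition _ := Finite.on quot.

Definition to_quot (x : G) : quot :=
  exist _ (Ordinal (coset_idx_lt x)) (introT eqP (proj2 (coset_idxP _ _) (congN_coset_rep x))).
Definition quot_rep (u : quot) : G := coset_rep (val (val u)).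

Lemma to_quot_rep u : to_quot (quot_rep u) = u.
Proof. by case: u => [[i lt_i] /= idx_i]; do 2!apply: val_inj => /=; apply/eqP. Qed.

Lemma to_quotP x y : to_quot x = to_quot y <-> congN x y.
Proof.
rewrite -coset_idxP; split=> [/(congr1 (fun u => val (val u))) // | idx_xy].
by do 2!apply: val_inj => /=.
Qed.

Lemma congN_quot_rep x : congN (quot_rep (to_quot x)) x.
Proof. exact: congN_coset_rep. Qed.

Definition quot_mul u v := to_quot (quot_rep u ⊗ quot_rep v).
Definition quot_inv u := to_quot (ginv (quot_rep u)).

Lemma quot_mulE x y : quot_mul (to_quot x) (to_quot y) = to_quot (x ⊗ y).
Proof. by apply/to_quotP/congNM; apply: congN_quot_rep. Qed.

Lemma quot_invE x : quot_inv (to_quot x) = to_quot (ginv x).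
Proof. by apply/to_quotP/congNV/congN_quot_rep. Qed.

Lemma quot_mulA : associative quot_mul.
Proof.
move=> u v w; rewrite -(to_quot_rep u) -(to_quot_rep v) -(to_quot_rep w).
by rewrite !quot_mulE gmulA.
Qed.

Lemma quot_mul1 : left_id (to_quot gone) quot_mul.
Proof. by move=> u; rewrite -(to_quot_rep u) quot_mulE gmul1. Qed.

Lemma quot_mulV : left_inverse (to_quot gone) quot_inv quot_mul.
Proof. by move=> u; rewrite -(to_quot_rep u) quot_invE quot_mulE gmulV. Qed.

HB.instance Definition _ := Finite_isGroup.Build quot quot_mulA quot_mul1 quot_mulV.
Definition quot_group : finGroupType := quot.

Lemma to_quot_hom : is_hom (to_quot : G -> quot_group).
Proof. by move=> x y; rewrite -quot_mulE. Qed.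

End FiniteQuotient.

Lemma finite_quotient (G : Grp) (N : G -> Prop) : fi_normal N ->
  exists (gT : finGroupType) (phi : G -> gT), is_hom phi /\
    (forall u, exists g, phi g = u) /\ (forall x y, phi x = phi y <-> N (ginv x ⊗ y)).
Proof.
move=> [N_sub [N_normal [reps reps_cover]]].
exists (quot_group N_sub N_normal reps_cover), (to_quot N_sub reps_cover).
split; first exact: to_quot_hom.
by split=> [u | x y]; [exists (quot_rep u); apply: to_quot_rep | apply: to_quotP].
Qed.

Definition quot_norm (G : Grp) (gT : finGroupType) (phi : G -> gT) (l : G -> nat)
    (u : gT) : nat :=
  nat_min (fun n => exists g, phi g = u /\ l g = n).

Section QuotientNorm.
Variables (G : Grp) (gT : finGroupType) (phi : G -> gT) (l : G -> nat).
Hypotheses (phiM : is_hom phi) (phi_onto : forall u, exists g, phi g = u).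
Hypothesis l_norm : inv_norm l.
Local Notation lq := (quot_norm phi l).

Lemma quot_normP u :
  (exists g, phi g = u /\ l g = lq u) /\ forall g, phi g = u -> (lq u <= l g)%N.
Proof.
have [g <-] := phi_onto u.
have [attained minimal] := nat_minP (P := fun n => exists h, phi h = phi g /\ l h = n)
  (ex_intro _ (l g) (ex_intro _ g (conj erefl erefl))).
by split=> // h phi_h; apply: minimal; exists h.
Qed.

Lemma quot_norm_le g : (lq (phi g) <= l g)%N.
Proof. exact: (proj2 (quot_normP _)). Qed.

Lemma quot_norm_attained u : exists g, phi g = u /\ l g = lq u.
Proof. exact: (proj1 (quot_normP u)). Qed.

Lemma quot_normE g : (forall h, phi h = phi g -> (l g <= l h)%N) -> lq (phi g) = l g.
Proof.
move=> l_min; apply/eqP; rewrite eqn_leq quot_norm_le /=.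
by have [h [/l_min ? <-]] := quot_norm_attained (phi g).
Qed.

Lemma quot_normV_le u : (lq (u^-1)%g <= lq u)%N.
Proof.
have [g [<- <-]] := quot_norm_attained u.
by rewrite -(homV phiM) -(normV l_norm g) quot_norm_le.
Qed.

Lemma quot_normJ_le u v : (lq (u ^ v)%g <= lq u)%N.
Proof.
have [g [<- <-]] := quot_norm_attained u; have [h <-] := phi_onto v.
by rewrite -(homJ phiM) -(normJ l_norm g h) quot_norm_le.
Qed.

Lemma quot_norm_inv_int_norm : inv_int_norm lq.
Proof.
split; last split; last split; last split.
- by apply/eqP; rewrite -leqn0 -(norm1 l_norm) -(hom1 phiM) quot_norm_le.
- move=> u; apply/eqP; rewrite eqn_leq quot_normV_le /=.
  by have := quot_normV_le u^-1%g; rewrite invgK.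
- move=> u v; have [g [<- <-]] := quot_norm_attained u.
  have [h [<- <-]] := quot_norm_attained v.
  by rewrite -phiM (leq_trans (quot_norm_le _)) ?(normM l_norm).
- move=> u; have [g [<- <-]] := quot_norm_attained u.
  by move=> /(norm_eq0 l_norm) ->; apply: hom1.
- move=> u v; apply/eqP; rewrite eqn_leq quot_normJ_le /=.
  by have := quot_normJ_le (u ^ v)%g v^-1%g; rewrite conjgK.
Qed.

End QuotientNorm.

Lemma almost_hom_of_isometric_on (G : Grp) (gT : finGroupType) (l1 : G -> nat)
    (l2 : gT -> nat) (D : list G) (Q : seq rat) (phi : G -> gT) :
  is_hom phi -> (forall x y, List.In x D -> List.In y D -> phi x = phi y -> x = y) ->
  (forall g, List.In g D -> l2 (phi g) = l1 g) -> almost_hom l1 l2 D Q phi.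
Proof.
move=> phiM phi_inj phi_iso; split=> //; split=> [h g _ _ _ | g q Dg _]; first exact: phiM.
by rewrite phi_iso.
Qed.

Section ClosedBalls.
Variables (G : Grp) (l : G -> nat).

Lemma closed_balls_of_mfr : mfr_finite_inv l ->
  forall m, profinite_closed (fun g => (l g <= m)%N).
Proof.
move=> l_mfr m x lx_gt.
have Q_ge0 : all (fun q : rat => 0 <= q)%R [:: 0; m%:R]%R by rewrite /= ler0n.
have [gT [lC [phi [_ [phiM [lC_le [_ [_ phi_cmp]]]]]]]] :=
  l_mfr [:: x] _ Q_ge0 (mem_head _ _).
have [K_sub [K_normal K_fi]] := kernel_fi_normal phiM.
exists (fun n => phi n = 1%g); do 3!split=> //.
have [_ [[lCx_gt _] _]] := phi_cmp x m%:R%R (or_introl erefl) (mem_last 0 [:: m%:R])%R.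
move=> n Kn; apply/negP; rewrite -ltnNge.
have := lC_le (x ⊗ n); rewrite phiM Kn mulg1; apply: leq_trans.
by rewrite -(ltr_nat rat) lCx_gt // ltr_nat ltnNge; apply/negP.
Qed.

Lemma coset_norm_bound : (forall m, profinite_closed (fun g => (l g <= m)%N)) ->
  forall g, exists N, fi_normal N /\ forall n, N n -> (l g <= l (g ⊗ n))%N.
Proof.
move=> l_closed g; have [lg0 | lg_gt0] := posnP (l g).
  by exists (fun _ => True); split=> [|n _]; [apply: fi_normalT | rewrite lg0].
have [|N [N_sub [N_normal [N_fi N_out]]]] := l_closed (l g).-1 g.
  by apply/negP; rewrite -ltnNge ltn_predL.
by exists N; split=> [|n /N_out]; [| move: lg_gt0; lia].
Qed.

Lemma mfr_of_closed_balls : inv_norm l ->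
  (forall m, profinite_closed (fun g => (l g <= m)%N)) -> mfr_finite_inv l.
Proof.
move=> l_norm l_closed D Q _ _.
pose L := List.app D (List.map (fun p => ginv p.2 ⊗ p.1) (List.list_prod D D)).
have [N [N_fi N_bound]] :=
  @fi_normal_common G G (fun g n => l g <= l (g ⊗ n))%N L
    (fun g _ => coset_norm_bound l_closed g).
have [gT [phi [phiM [phi_onto phi_ker]]]] := finite_quotient N_fi.
pose lC := quot_norm phi l.
have lC_norm : inv_int_norm lC := quot_norm_inv_int_norm phiM phi_onto l_norm.
have lC_exact g : List.In g L -> lC (phi g) = l g.
  move=> Lg; apply: (quot_normE phi_onto) => h /esym /phi_ker Nh.
  by have := N_bound g Lg _ Nh; rewrite gmulKV.
exists gT, lC, phi; split=> //; split=> //; split; first exact: quot_norm_le.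
apply: almost_hom_of_isometric_on => // [x y Dx Dy phi_xy | g Dg].
  have Lyx : List.In (ginv y ⊗ x) L.
    by apply/List.in_or_app; right; apply: (List.in_map _ _ (x, y)); apply/List.in_prod.
  have := lC_exact _ Lyx; rewrite phiM (homV phiM) phi_xy mulVg (proj1 lC_norm).
  by move=> /esym /(norm_eq0 l_norm) yx1; rewrite -(gmulKV y x) yx1 gmulx1.
by apply/lC_exact/List.in_or_app; left.
Qed.

End ClosedBalls.

Theorem proposition3p5 (G : Grp) (S : list G)
    (Hsym : forall s, List.In s S -> List.In (ginv s) S)
    (Hgen : generates (Sbar S)) :
  mfr_finite_inv (wnorm S) <->
  (forall m : nat, profinite_closed (fun g : G => (wnorm S g <= m)%N)).
Proof.
split; first exact: closed_balls_of_mfr.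
exact/mfr_of_closed_balls/wnorm_inv_norm.
Qed.
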